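(* Let $f(t)\in\mathbb{F}_q[t;\theta]$ be a right divisor of some monic $F(t)\in\mathbb{F}_q[t;\theta]$ of degree $n$, let $\mathscr{C}=\{w\in\mathbb{F}_q[t;\theta]:\deg w<n,\ w=a(t)f(t)\text{ for some }a\in\mathbb{F}_q[t;\theta]\}\subseteq\mathbb{F}_q^n$ be the linear code generated by $f$, and let $\mathscr{C}^{[]_s}=\{v\in\mathbb{F}_q[x]:\deg v<[n]_s,\ v=b(x)f^{[]_s}(x)\text{ for some }b\in\mathbb{F}_q[x]\}\subseteq\mathbb{F}_q^{[n]_s}$ be the linear code generated by $f^{[]_s}(x)$. Then $d(\mathscr{C}^{[]_s})\le d(\mathscr{C})$, and equality holds if and only if some codeword of minimal weight of $\mathscr{C}^{[]_s}$ belongs to $\mathbb{F}_q[x^{[]_s}]$.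
   Context: $q=p^r$ with $p$ prime, $\theta(a)=a^{p^s}$ for $a\in\mathbb{F}_q$ with $1\le s\le r-1$, and $\mathbb{F}_q[t;\theta]$ is the skew polynomial ring with $ta=\theta(a)t$. Polynomials of degree $<n$ are identified with their coefficient vectors in $\mathbb{F}_q^n$; the weight of a polynomial is its number of nonzero coefficients, and $d(\cdot)$ is the minimum Hamming distance (minimum nonzero weight). For $i\ge0$, $[i]_s=\frac{(p^s)^i-1}{p^s-1}$. For $f(t)=\sum_ia_it^i$, $f^{[]_s}(x)=\sum_ia_ix^{[i]_s}\in\mathbb{F}_q[x]$ (commutative polynomial ring), and $\mathbb{F}_q[x^{[]_s}]=\{\sum_i\alpha_ix^{[i]_s}\}\subseteq\mathbb{F}_q[x]$. *)

(* Skew polynomials F_q[t;theta] are represented by their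
   coefficient polynomials in {poly F}, with the skew product skew_mul. *)
From HB Require Import structures.
From mathcomp Require Import all_boot all_order all_algebra all_field.
Set Implicit Arguments. Unset Strict Implicit. Unset Printing Implicit Defensive.
Import GRing.Theory.
Local Open Scope ring_scope.

Section Skew.
Variable F : finFieldType.
Variables (p s : nat).

Definition theta (a : F) : F := a ^+ (p ^ s)%N.

Definition skew_mul (f g : {poly F}) : {poly F} :=
  \sum_(i < size f) \sum_(j < size g)
     (f`_i * iter i theta g`_j) *: 'X^(i + j).

Definition qbr (i : nat) : nat := (((p ^ s) ^ i).-1 %/ (p ^ s).-1)%N.

Definition linearize (f : {poly F}) : {poly F} :=
  \sum_(i < size f) f`_i *: 'X^(qbr i).

Definition in_qbr_span (v : {poly F}) : Prop :=
  forall k, v`_k != 0 -> exists i, k = qbr i.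

Definition skew_code (n : nat) (f : {poly F}) : {poly F} -> Prop :=
  fun w => (size w <= n)%N /\ exists a, w = skew_mul a f.

Definition lin_code (n : nat) (f : {poly F}) : {poly F} -> Prop :=
  fun v => (size v <= qbr n)%N /\ exists b, v = b * linearize f.

End Skew.

Definition weight (F : finFieldType) (w : {poly F}) : nat :=
  count (fun c : F => c != 0) w.

Definition is_min_dist (F : finFieldType) (C : {poly F} -> Prop) (d : nat) : Prop :=
  (exists w, C w /\ w != 0 /\ weight w = d) /\
  (forall w, C w -> w != 0 -> (d <= weight w)%N).

(* The linearization g(t) |-> g^{[]_s}(x) is additive and injective and moves the
   coefficient of t^i to x^{[i]_s}, so it preserves weights.  Since
   [i + j]_s = [i]_s + p^(s i) [j]_s and theta^i is the p^(s i)-th power map, the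
   linearization of (a t^i) * b(t) is a x^{[i]_s} (b^{[]_s})^(p^(s i)); hence f^{[]_s}
   divides the linearization of every skew multiple of f, and C^{[]_s} contains the
   linearized codewords of C with unchanged weights, so d(C^{[]_s}) <= d(C).
   Conversely, skew right division w = a f + r with deg r < deg f shows that if
   f^{[]_s} divides w^{[]_s} then r = 0, because r^{[]_s} would be a nonzero multiple
   of f^{[]_s} of smaller degree.  Thus the codewords of C^{[]_s} lying in
   F_q[x^{[]_s}] are exactly the linearized codewords of C, which gives the
   equality criterion. *)

From Pilot Require Import Defs.
From HB Require Import structures.
From mathcomp Require Import all_boot all_order all_algebra all_field.
Import GRing.Theory.
Local Open Scope ring_scope.

Set Implicit Arguments. Unset Strict Implicit. Unset Printing Implicit Defensive.

Section QBracket.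
Variables p s : nat.
Hypothesis ps_gt1 : (1 < p ^ s)%N.
Local Notation q := (p ^ s)%N.
Local Notation qbr := (qbr p s).

Lemma qbrE i : qbr i = (\sum_(k < i) q ^ k)%N.
Proof. by rewrite /Defs.qbr predn_exp mulKn // -subn1 subn_gt0. Qed.

Lemma qbrS i : qbr i.+1 = (qbr i + q ^ i)%N.
Proof. by rewrite !qbrE big_ord_recr. Qed.

Lemma qbrD i j : qbr (i + j) = (qbr i + q ^ i * qbr j)%N.
Proof.
rewrite !qbrE big_split_ord big_distrr /=; congr (_ + _)%N.
by apply: eq_bigr => k _; rewrite expnD.
Qed.

Lemma ltn_qbrS i : (qbr i < qbr i.+1)%N.
Proof. by rewrite qbrS -addn1 leq_add2l expn_gt0 ltnW. Qed.

Lemma ltn_qbr : {mono qbr : i j / (i < j)%N}.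
Proof. exact/leqW_mono/leq_mono/(homo_ltn ltn_trans ltn_qbrS). Qed.

Lemma leq_qbr : {mono qbr : i j / (i <= j)%N}.
Proof. exact/leq_mono/(homo_ltn ltn_trans ltn_qbrS). Qed.

Lemma qbr_inj : injective qbr.
Proof. exact: incn_inj leq_qbr. Qed.

Lemma qbr_ge i : (i <= qbr i)%N.
Proof. by elim: i => [|i IH] //; apply: leq_ltn_trans IH (ltn_qbrS i). Qed.

End QBracket.

Section Weight.
Variable F : finFieldType.
Implicit Types g v w : {poly F}.

Definition coef_support w : seq nat := [seq k <- iota 0 (size w) | w`_k != 0].

Lemma mem_coef_support w k : (k \in coef_support w) = (w`_k != 0).
Proof.
rewrite mem_filter mem_iota add0n andb_idr //.
by apply: contraR; rewrite -leqNgt => /leq_sizeP ->; rewrite ?eqxx.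
Qed.

Lemma uniq_coef_support w : uniq (coef_support w).
Proof. exact/filter_uniq/iota_uniq. Qed.

Lemma weight_coef_support w : weight w = size (coef_support w).
Proof. by rewrite /weight -{1}(mkseq_nth 0 w) count_map size_filter. Qed.

Lemma weight_reindex (h : nat -> nat) g v :
  injective h -> (forall i, v`_(h i) = g`_i) ->
  (forall k, v`_k != 0 -> exists i, k = h i) ->
  weight v = weight g.
Proof.
move=> h_inj vhg v_h; rewrite !weight_coef_support -(size_map h (coef_support g)).
apply/perm_size/uniq_perm; rewrite ?map_inj_uniq ?uniq_coef_support // => k.
rewrite mem_coef_support; apply/idP/mapP => [/[dup] /v_h [i ->]|[i]].
  by rewrite vhg -mem_coef_support => gi; exists i.
by rewrite mem_coef_support -vhg => ? ->.
Qed.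

End Weight.

Section Linearize.
Variable F : finFieldType.
Variables p s : nat.
Local Notation qbr := (qbr p s).
Local Notation lin := (@linearize F p s).
Implicit Types g v : {poly F}.

Lemma linearize_widen N g :
  (size g <= N)%N -> lin g = \sum_(i < N) g`_i *: 'X^(qbr i).
Proof.
move=> le_gN; rewrite /linearize (big_ord_widen _ (fun i => g`_i *: 'X^(qbr i)) le_gN).
rewrite big_mkcond; apply: eq_bigr => i _; case: ltnP => // /leq_sizeP ->//.
by rewrite scale0r.
Qed.

Lemma linearize_is_zmod_morphism : zmod_morphism lin.
Proof.
move=> g h; set N := maxn (size g) (size h).
have le_gN : (size g <= N)%N by rewrite leq_maxl.
have le_hN : (size h <= N)%N by rewrite leq_maxr.
have le_ghN : (size (g - h)%R <= N)%N by rewrite (leq_trans (size_polyD _ _)) ?size_polyN.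
rewrite !(linearize_widen le_gN, linearize_widen le_hN, linearize_widen le_ghN) -sumrB.
by apply: eq_bigr => i _; rewrite coefB scalerBl.
Qed.

HB.instance Definition _ :=
  GRing.isZmodMorphism.Build {poly F} {poly F} lin linearize_is_zmod_morphism.

Lemma linearizeZXn c k : lin (c *: 'X^k) = c *: 'X^(qbr k).
Proof.
rewrite (linearize_widen (_ : size (c *: 'X^k) <= k.+1)%N); last first.
  by rewrite (leq_trans (size_scale_leq _ _)) ?size_polyXn.
rewrite big_ord_recr /= big1 ?add0r => [|i _]; rewrite coefZ coefXn ?eqxx ?mulr1 //.
by rewrite ltn_eqF ?mulr0 ?scale0r.
Qed.

Lemma coef_linearize g k : (lin g)`_k = \sum_(i < size g | qbr i == k) g`_i.
Proof. by rewrite coef_sumMXn. Qed.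

Lemma in_qbr_span_linearize g : in_qbr_span p s (lin g).
Proof.
move=> k; rewrite coef_linearize.
case: (boolP [exists i : 'I_(size g), qbr i == k]) => [/existsP [i /eqP <-] _|].
  by exists i.
by rewrite negb_exists => /forallP none; rewrite big_pred0 ?eqxx // => i; apply/negbTE.
Qed.

Hypothesis ps_gt1 : (1 < p ^ s)%N.

Lemma coef_linearize_qbr g i : (lin g)`_(qbr i) = g`_i.
Proof.
have lt_iN : (i < maxn (size g) i.+1)%N by rewrite leq_maxr.
rewrite (linearize_widen (leq_maxl _ i.+1)) coef_sumMXn.
rewrite (eq_bigl (pred1 (Ordinal lt_iN))) ?big_pred1_eq // => j.
by rewrite (inj_eq (qbr_inj ps_gt1)).
Qed.

Lemma linearize_eq0 g : (lin g == 0) = (g == 0).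
Proof.
apply/eqP/eqP => [g0|->]; last exact: raddf0.
by apply/polyP => i; rewrite -coef_linearize_qbr g0 !coef0.
Qed.

Lemma size_linearize g : (size (lin g) <= qbr (size g))%N.
Proof.
apply/leq_sizeP => k le_k; rewrite coef_linearize big_pred0 // => i.
by apply: contraTF le_k => /eqP <-; rewrite -ltnNge ltn_qbr.
Qed.

Lemma size_linearize_gt g : g != 0 -> (qbr (size g).-1 < size (lin g))%N.
Proof.
move=> g0; rewrite ltnNge; apply/negP => /leq_sizeP/(_ _ (leqnn _)).
by rewrite coef_linearize_qbr -lead_coefE => /eqP; rewrite lead_coef_eq0 (negbTE g0).
Qed.

Lemma weight_linearize g : weight (lin g) = weight g.
Proof.
exact: weight_reindex (qbr_inj ps_gt1) (coef_linearize_qbr g) (@in_qbr_span_linearize g).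
Qed.

Lemma in_qbr_span_image v : in_qbr_span p s v -> exists g, v = lin g.
Proof.
move=> v_span; exists (\poly_(i < size v) v`_(qbr i)).
have coef_qbr i : (lin (\poly_(i < size v) v`_(qbr i)))`_(qbr i) = v`_(qbr i).
  rewrite coef_linearize_qbr coef_poly; case: ltnP => // /leq_trans le_v.
  by rewrite nth_default // le_v ?qbr_ge.
apply/polyP => k; have [vk0|/v_span [i ->]] := eqVneq v`_k 0; last by rewrite coef_qbr.
rewrite vk0; apply/esym/eqP/contraT => nz; have [i ki] := in_qbr_span_linearize nz.
by move: nz; rewrite ki coef_qbr -ki vk0 eqxx.
Qed.

End Linearize.

Lemma ltn_size_sub_lead (R : nzRingType) (u w : {poly R}) :
  w != 0 -> size u = size w -> lead_coef u = lead_coef w ->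
  (size (w - u)%R < size w)%N.
Proof.
move=> w0 size_uw lead_uw; have size_w : size w = (size w).-1.+1.
  by rewrite prednK // size_poly_gt0.
rewrite [X in (_ < X)%N]size_w ltnS; apply/leq_sizeP => k.
rewrite leq_eqVlt => /orP [/eqP <-|lt_wk].
  by rewrite coefB -lead_coefE -size_uw -lead_coefE lead_uw subrr.
by rewrite coefB !nth_default ?subrr // ?size_uw size_w.
Qed.

Section SkewMul.
Variable F : finFieldType.
Variables p s : nat.
Local Notation q := (p ^ s)%N.
Local Notation th := (@theta F p s).
Local Notation qbr := (qbr p s).
Local Notation lin := (@linearize F p s).
Local Notation "a ** g" := (skew_mul p s a g) (at level 40).
Implicit Types a b f g w : {poly F}.

Lemma iter_theta i (x : F) : iter i th x = x ^+ (q ^ i)%N.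
Proof. by elim: i => [|i IH] /=; rewrite ?expr1 // IH /theta -exprM expnSr. Qed.

Lemma skew_mulE a g :
  a ** g = \sum_(i < size a) a`_i *: (map_poly (iter i th) g * 'X^i).
Proof.
apply: eq_bigr => i _; rewrite /map_poly poly_def mulr_suml scaler_sumr.
by apply: eq_bigr => j _; rewrite -scalerAl scalerA -exprD addnC.
Qed.

Lemma skew_mul_widen N a g : (size a <= N)%N ->
  a ** g = \sum_(i < N) a`_i *: (map_poly (iter i th) g * 'X^i).
Proof.
move=> le_aN; rewrite skew_mulE.
rewrite (big_ord_widen _ (fun i => a`_i *: (map_poly (iter i th) g * 'X^i)) le_aN).
rewrite big_mkcond; apply: eq_bigr => i _; case: ltnP => // /leq_sizeP ->//.
by rewrite scale0r.
Qed.

Lemma skew_mul0r g : 0 ** g = 0.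
Proof. by rewrite skew_mulE size_poly0 big_ord0. Qed.

Lemma skew_mulr0 a : a ** 0 = 0.
Proof. by rewrite skew_mulE big1 // => i _; rewrite map_poly0 mul0r scaler0. Qed.

Lemma skew_mulDl a b g : (a + b) ** g = a ** g + b ** g.
Proof.
set N := maxn (size a) (size b).
have le_aN : (size a <= N)%N by rewrite leq_maxl.
have le_bN : (size b <= N)%N by rewrite leq_maxr.
have le_abN : (size (a + b)%R <= N)%N by apply: size_polyD.
rewrite !(skew_mul_widen _ le_aN, skew_mul_widen _ le_bN, skew_mul_widen _ le_abN).
by rewrite -big_split; apply: eq_bigr => i _; rewrite coefD scalerDl.
Qed.

Lemma skew_mulZXn c d g : (c *: 'X^d) ** g = c *: (map_poly (iter d th) g * 'X^d).
Proof.
rewrite (@skew_mul_widen d.+1); last first.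
  by rewrite (leq_trans (size_scale_leq _ _)) ?size_polyXn.
rewrite big_ord_recr /= big1 ?add0r => [|i _]; rewrite coefZ coefXn ?eqxx ?mulr1 //.
by rewrite ltn_eqF ?mulr0 ?scale0r.
Qed.

Hypothesis ps_gt1 : (1 < q)%N.
Hypothesis pchar_F : p \in [pchar F].

Lemma linearize_exp g i :
  lin g ^+ (q ^ i)%N = \sum_(j < size g) g`_j ^+ (q ^ i)%N *: 'X^(q ^ i * qbr j).
Proof.
have q_nat : [pchar {poly F}].-nat (q ^ i)%N.
  have pchar_polyF : p \in [pchar {poly F}] by rewrite pchar_poly.
  by rewrite (eq_pnat _ (pcharf_eq pchar_polyF)) !pnatX pnat_id ?(pcharf_prime pchar_F).
have exp0 : (0 : {poly F}) ^+ (q ^ i)%N = 0.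
  by rewrite expr0n expn_eq0 gtn_eqF ?(ltn_trans _ ps_gt1).
rewrite (big_morph _ (fun x y => exprDn_pchar x y q_nat) exp0).
by apply: eq_bigr => j _; rewrite exprZn -exprM mulnC.
Qed.

Lemma linearize_twist c i g :
  lin (c *: (map_poly (iter i th) g * 'X^i)) = c *: 'X^(qbr i) * lin g ^+ (q ^ i)%N.
Proof.
rewrite linearize_exp /map_poly poly_def mulr_suml scaler_sumr raddf_sum mulr_sumr.
apply: eq_bigr => j _; rewrite iter_theta.
rewrite -scalerAl scalerA -exprD /= linearizeZXn -scalerAl -scalerAr scalerA -exprD.
by rewrite addnC (qbrD ps_gt1).
Qed.

Lemma linearize_skew_mul a g :
  lin (a ** g) = (\sum_(i < size a) a`_i *: 'X^(qbr i) * lin g ^+ (q ^ i).-1) * lin g.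
Proof.
rewrite skew_mulE raddf_sum mulr_suml; apply: eq_bigr => i _.
by rewrite /= linearize_twist -mulrA -exprSr prednK // expn_gt0 ltnW.
Qed.

Lemma dvdp_linearize_skew_mul a g : lin g %| lin (a ** g).
Proof. by apply/dvdpP; eexists; apply: linearize_skew_mul. Qed.

Lemma skew_mul_cancel_lead f w : f != 0 -> (size f <= size w)%N ->
  exists u, (size (w - u ** f)%R < size w)%N.
Proof.
move=> f0 le_fw; have w0 : w != 0 by rewrite -size_poly_gt0 (leq_trans _ le_fw) ?size_poly_gt0.
set d := (size w - size f)%N; set l := iter d th (lead_coef f).
have l0 : l != 0 by rewrite /l iter_theta expf_neq0 ?lead_coef_eq0.
have th0 : iter d th 0 = 0 by rewrite iter_theta expr0n gtn_eqF // expn_gt0 (ltnW ps_gt1).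
have c0 : lead_coef w / l != 0 by rewrite mulf_neq0 ?invr_eq0 ?lead_coef_eq0.
exists ((lead_coef w / l) *: 'X^d); rewrite skew_mulZXn.
have mf0 : map_poly (iter d th) f != 0.
  by rewrite -size_poly_gt0 size_map_poly_id0 ?size_poly_gt0.
apply: ltn_size_sub_lead => //.
  by rewrite size_scale // size_mulXn // size_map_poly_id0 // subnK.
by rewrite lead_coefZ lead_coefM lead_coefXn mulr1 lead_coef_map_id0 // divfK.
Qed.

Lemma skew_mul_edivp f w : f != 0 ->
  exists a r, w = a ** f + r /\ (size r < size f)%N.
Proof.
move=> f0; move: {2}(size w) (leqnn (size w)) => n; elim: n w => [|n IH] w le_wn.
  by exists 0, w; rewrite skew_mul0r add0r (leq_ltn_trans le_wn) // size_poly_gt0.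
have [lt_wf|le_fw] := ltnP (size w) (size f); first by exists 0, w; rewrite skew_mul0r add0r.
have [u lt_uw] := skew_mul_cancel_lead f0 le_fw.
have [a [r [def_w lt_rf]]] := IH (w - u ** f) (leq_trans lt_uw le_wn).
by exists (a + u), r; rewrite skew_mulDl addrAC -def_w subrK.
Qed.

Lemma skew_mul_dvd_linearize f w : f != 0 -> lin f %| lin w -> exists a, w = a ** f.
Proof.
move=> f0 dvd_fw; have [a [r [def_w lt_rf]]] := skew_mul_edivp w f0.
suff r0 : r = 0 by exists a; rewrite def_w r0 addr0.
have dvd_fr : lin f %| lin r.
  by rewrite -(dvdp_addr _ (dvdp_linearize_skew_mul a f)) -raddfD -def_w.
apply/eqP; rewrite -(linearize_eq0 ps_gt1); apply: contraTT lt_rf => r0.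
have : (qbr (size f).-1 < qbr (size r))%N.
  apply: leq_trans (size_linearize_gt ps_gt1 f0) _.
  exact: leq_trans (dvdp_leq r0 dvd_fr) (size_linearize ps_gt1 r).
by rewrite (ltn_qbr ps_gt1) -leqNgt; case: (size f).
Qed.

End SkewMul.

Section Codes.
Variable F : finFieldType.
Variables p s n : nat.
Hypothesis ps_gt1 : (1 < p ^ s)%N.
Hypothesis pchar_F : p \in [pchar F].
Local Notation lin := (@linearize F p s).

Lemma lin_code_linearize f w : f != 0 ->
  lin_code p s n f (lin w) <-> skew_code p s n f w.
Proof.
move=> f0; split=> [[size_lw dvd_fw] | [size_w [a def_w]]]; split.
- have [->|w0] := eqVneq w 0; first by rewrite size_poly0.
  have := leq_trans (size_linearize_gt ps_gt1 w0) size_lw.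
  by rewrite (ltn_qbr ps_gt1); case: (size w).
- by apply: (skew_mul_dvd_linearize ps_gt1 pchar_F f0); apply/dvdpP.
- by rewrite (leq_trans (size_linearize ps_gt1 _)) ?(leq_qbr ps_gt1).
- by apply/dvdpP; rewrite def_w dvdp_linearize_skew_mul.
Qed.

End Codes.

Theorem mainTheorem9 (F : finFieldType) (p r s n : nat)
  (Hp : prime p) (Hchar : p \in [pchar F]) (Hcard : #|F| = (p ^ r)%N)
  (Hs1 : (1 <= s)%N) (Hs2 : (s <= r - 1)%N)
  (f Fm : {poly F}) (HFm : Fm \is monic) (HFdeg : size Fm = n.+1)
  (Hdiv : exists h : {poly F}, Fm = skew_mul p s h f)
  (dC dCs : nat)
  (HdC : is_min_dist (skew_code p s n f) dC)
  (HdCs : is_min_dist (lin_code p s n f) dCs) :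
  (dCs <= dC)%N /\
  (dCs = dC <->
     exists v, lin_code p s n f v /\ v != 0 /\ weight v = dCs /\ in_qbr_span p s v).
Proof.
have ps_gt1 : (1 < p ^ s)%N by rewrite -(exp1n s) ltn_exp2r ?prime_gt1.
have f0 : f != 0.
  apply: contraTneq HFm => f0; case: Hdiv => h ->.
  by rewrite f0 skew_mulr0 monicE lead_coef0 eq_sym oner_eq0.
have code_lin := lin_code_linearize n ps_gt1 Hchar _ f0.
have lin_eq0 := linearize_eq0 ps_gt1; have weight_lin := weight_linearize ps_gt1.
case: HdC => [[w [Cw [w0 weight_w]]] dC_min]; case: HdCs => [_ dCs_min].
have le_dCs_dC : (dCs <= dC)%N.
  by rewrite -weight_w -weight_lin dCs_min ?lin_eq0 //; apply/code_lin.
split=> //; split=> [eq_dCs_dC | [v [Cv [v0 [weight_v span_v]]]]].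
  exists (linearize p s w); rewrite lin_eq0 weight_lin weight_w eq_dCs_dC.
  by split; [apply/code_lin | do !split=> //; apply: in_qbr_span_linearize].
have [x def_v] := in_qbr_span_image ps_gt1 span_v; rewrite def_v in Cv v0 weight_v.
apply/eqP; rewrite eqn_leq le_dCs_dC -weight_v weight_lin dC_min //.
  by apply/code_lin.
by rewrite -lin_eq0.
Qed.
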